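(* Let $f\in\mathcal S_{\mathbf M}$, let $\|\cdot\|$ be either the Luxemburg norm $\|\cdot\|_{\mathbf M}$ or the Orlicz norm $\|\cdot\|^*_{\mathbf M}$ (the same choice throughout), and let $\varphi\in\Phi$ and $\tau>0$ be such that $\varphi$ is nondecreasing on $[0,\tau]$ and $\varphi(\tau)=\max\{\varphi(t):t\in\mathbb R\}$. Then for any $n\in\mathbb N$, $$\omega_\varphi\Big(f,\frac{\tau}{n}\Big)\le\sum_{\nu=1}^n\Big(\varphi\Big(\frac{\tau\nu}{n}\Big)-\varphi\Big(\frac{\tau(\nu-1)}{n}\Big)\Big)E_\nu(f).$$
   Context: $L$ is the space of $2\pi$-periodic Lebesgue integrable functions, with Fourier coefficients $\widehat f(k)=(2\pi)^{-1}\int_0^{2\pi}f(x)e^{-\mathrm{i}kx}\,dx$. Let $\mathbf M=\{M_k\}_{k\in\mathbb Z}$ be a sequence of Orlicz functions on $[0,\infty)$ (nondecreasing, convex, $M_k(0)=0$, $M_k(u)\to\infty$ as $u\to\infty$). For a complex sequence $c=\{c_k\}_{k\in\mathbb Z}$: Luxemburg norm $\|c\|_{\mathbf M}=\inf\{a>0:\sum_kM_k(|c_k|/a)\le1\}$; with $\tilde M_k(v)=\sup\{uv-M_k(u):u\ge0\}$ and $\Lambda$ the set of positive sequences $\lambda$ with $\sum_k\tilde M_k(\lambda_k)\le1$, Orlicz norm $\|c\|^*_{\mathbf M}=\sup\{\sum_k\lambda_k|c_k|:\lambda\in\Lambda\}$. $\mathcal S_{\mathbf M}$ is the space of $f\in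 L$ with $\|\{\widehat f(k)\}\|_{\mathbf M}<\infty$; norms of $f$ are those of $\{\widehat f(k)\}$. $E_\nu(f)=\inf\{\|f-t\|:t\in\mathcal T_{\nu-1}\}$, $\mathcal T_{\nu-1}$ the trigonometric polynomials $\sum_{|k|\le\nu-1}c_ke^{\mathrm{i}kx}$. $\Phi$ is the set of all continuous, bounded, nonnegative, even functions $\varphi:\mathbb R\to\mathbb R$ with $\varphi(0)=0$ such that $\{t:\varphi(t)=0\}$ has Lebesgue measure zero. For $h\in\mathbb R$, $\Delta_h^\varphi f$ is the sequence $\{\varphi(kh)\widehat f(k)\}_{k\in\mathbb Z}$ and $\omega_\varphi(f,\delta)=\sup_{|h|\le\delta}\|\Delta_h^\varphi f\|$. *)

From HB Require Import structures.
From mathcomp Require Import all_boot all_order all_algebra.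
From mathcomp Require Import all_classical all_reals all_analysis.
Set Implicit Arguments. Unset Strict Implicit. Unset Printing Implicit Defensive.
Import Order.TTheory GRing.Theory Num.Theory.
Import numFieldNormedType.Exports.
Local Open Scope classical_set_scope.
Local Open Scope ring_scope.

Section Defs.
Variable R : realType.

Definition orlicz_fun (M : R -> R) : Prop :=
  [/\ M 0 = 0,
      (forall u v, 0 <= u -> u <= v -> M u <= M v),
      (forall u v t, 0 <= u -> 0 <= v -> 0 <= t -> t <= 1 ->
          M ((1 - t) * u + t * v) <= (1 - t) * M u + t * M v) &
      (forall B : R, exists u0, forall u, u0 <= u -> B <= M u)].

Definition compl_fun (M : R -> R) (v : R) : \bar R :=
  ereal_sup [set ((u * v - M u)%:E) | u in [set u : R | 0 <= u]].

(* Norms of a complex sequence c, given through its moduli a k = |c_k|. *)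
Definition lux_norm (M : int -> R -> R) (a : int -> R) : \bar R :=
  ereal_inf [set (s%:E) | s in
    [set s : R | 0 < s /\ (\esum_(k in [set: int]) (M k (a k / s))%:E <= 1%:E)%E]].

Definition orl_norm (M : int -> R -> R) (a : int -> R) : \bar R :=
  ereal_sup [set (\esum_(k in [set: int]) (lam k * a k)%:E)%E | lam in
    [set lam : int -> R | (forall k, 0 <= lam k) /\
        (\esum_(k in [set: int]) compl_fun (M k) (lam k) <= 1%:E)%E]].

Inductive norm_kind := Luxemburg | Orlicz.

Definition seq_norm (nk : norm_kind) (M : int -> R -> R) (a : int -> R) : \bar R :=
  match nk with Luxemburg => lux_norm M a | Orlicz => orl_norm M a end.

(* A complex-valued function f = u + i v. *)
Definition in_L (u v : R -> R) : Prop :=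
  [/\ (forall x, u (x + 2 * pi) = u x), (forall x, v (x + 2 * pi) = v x),
      lebesgue_measure.-integrable `[0%R, 2 * pi] (EFin \o u) &
      lebesgue_measure.-integrable `[0%R, 2 * pi] (EFin \o v)].

(* Fourier coefficient (2pi)^-1 int_0^{2pi} f(x) e^{-ikx} dx, real and imaginary parts:
   (u + i v)(cos kx - i sin kx) = (u cos kx + v sin kx) + i (v cos kx - u sin kx). *)
Definition fcoef_re (u v : R -> R) (k : int) : R :=
  (2 * pi)^-1 * Rintegral lebesgue_measure `[0%R, 2 * pi]
     (fun x => u x * cos (k%:~R * x) + v x * sin (k%:~R * x)).
Definition fcoef_im (u v : R -> R) (k : int) : R :=
  (2 * pi)^-1 * Rintegral lebesgue_measure `[0%R, 2 * pi]
     (fun x => v x * cos (k%:~R * x) - u x * sin (k%:~R * x)).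

Definition cmod (a b : R) : R := Num.sqrt (a ^+ 2 + b ^+ 2).

Definition fmod (u v : R -> R) (k : int) : R := cmod (fcoef_re u v k) (fcoef_im u v k).

Definition fnorm nk M (u v : R -> R) : \bar R := seq_norm nk M (fmod u v).

Definition in_SM M (u v : R -> R) : Prop := in_L u v /\ (lux_norm M (fmod u v) < +oo)%E.

(* E_nu(f) = inf { ||f - t|| : t in T_{nu-1} }, where
   t = sum_{|k| <= nu-1} c_k e^{ikx} has Fourier coefficients c_k for |k| <= nu-1
   and 0 otherwise; c_k = cr k + i ci k. *)
Definition best_approx nk M (u v : R -> R) (nu : nat) : \bar R :=
  ereal_inf [set seq_norm nk M
      (fun k => if (absz k < nu)%N
                then cmod (fcoef_re u v k - cr k) (fcoef_im u v k - ci k)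
                else fmod u v k)
    | cr in [set: int -> R] & ci in [set: int -> R]].

Definition in_Phi (phi : R -> R) : Prop :=
  (continuous phi /\ exists B : R, forall t, phi t <= B) /\
  [/\
      (forall t, 0 <= phi t),
      (forall t, phi (- t) = phi t),
      phi 0 = 0 &
      lebesgue_measure [set t : R | phi t = 0] = 0%E].

Definition modulus_phi nk M (phi : R -> R) (u v : R -> R) (delta : R) : \bar R :=
  ereal_sup [set seq_norm nk M (fun k => `|phi (k%:~R * h)| * fmod u v k)
    | h in [set h : R | `|h| <= delta]].

End Defs.

(* For |h| <= tau/n the multiplier |phi(kh)| is at most phi(tau min(|k|,n)/n), which telescopes
   into sum_nu Delta_nu [nu <= |k|] with Delta_nu = phi(tau nu/n) - phi(tau (nu-1)/n) >= 0.
   So {phi(kh) fhat(k)} is dominated coefficientwise by sum_nu Delta_nu g_nu, where g_nu is fhat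
   with the coefficients of index |k| < nu replaced by 0.  Both norms are monotone, subadditive
   (for the Luxemburg norm this is convexity of the M_k) and positively homogeneous on
   nonnegative sequences, and g_nu is dominated by the coefficients of f - t for every
   t in T_(nu-1), whence ||g_nu|| <= E_nu(f). *)

From HB Require Import structures.
From mathcomp Require Import all_boot all_order all_algebra.
From mathcomp Require Import all_classical all_reals all_analysis.
From mathcomp Require Import ring.
Set Implicit Arguments. Unset Strict Implicit. Unset Printing Implicit Defensive.
Import Order.TTheory GRing.Theory Num.Theory.
Local Open Scope classical_set_scope.
Local Open Scope ring_scope.

Section OrliczFunction.
Variables (R : realType) (M : R -> R).
Hypothesis HM : orlicz_fun M.

Lemma orlicz_fun0 : M 0 = 0.
Proof. by case: HM. Qed.

Lemma orlicz_fun_le x y : 0 <= x -> x <= y -> M x <= M y.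
Proof. by case: HM => _ + _ _; apply. Qed.

Lemma orlicz_fun_ge0 x : 0 <= x -> 0 <= M x.
Proof. by move=> x0; rewrite -orlicz_fun0; apply: orlicz_fun_le. Qed.

Lemma orlicz_fun_mediant x y s t : 0 <= x -> 0 <= y -> 0 < s -> 0 < t ->
  M ((x + y) / (s + t)) <= s / (s + t) * M (x / s) + t / (s + t) * M (y / t).
Proof.
move=> x0 y0 s0 t0; have st0 : 0 < s + t by rewrite addr_gt0.
have weight : 1 - t / (s + t) = s / (s + t) by field; rewrite gt_eqF.
have -> : (x + y) / (s + t) = (1 - t / (s + t)) * (x / s) + t / (s + t) * (y / t).
  by rewrite weight; field; rewrite !gt_eqF.
rewrite -weight; case: HM => _ _ + _; apply; rewrite ?divr_ge0 ?(ltW s0) ?(ltW t0) ?(ltW st0)//.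
by rewrite ler_pdivrMr// mul1r lerDr ltW.
Qed.

End OrliczFunction.

Lemma esumZ_le (R : realType) (T : choiceType) (D : set T) (c : R) (a : T -> \bar R) :
  0 <= c -> (forall k, 0 <= a k)%E ->
  (\esum_(k in D) (c%:E * a k) <= c%:E * \esum_(k in D) a k)%E.
Proof.
move=> c0 a0; apply: ge_ereal_sup => _ [X XD <-].
by rewrite -ge0_mule_fsumr// lee_wpmul2l ?lee_fin//; apply: ereal_sup_ubound; exists X.
Qed.

Section LuxemburgNorm.
Variables (R : realType) (M : int -> R -> R).
Hypothesis HM : forall k, orlicz_fun (M k).

Lemma lux_norm_ge0 a : (0 <= lux_norm M a)%E.
Proof. by apply: le_ereal_inf_tmp => _ [s [s0 _] <-]; rewrite lee_fin ltW. Qed.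

Lemma le_lux_norm a b : (forall k, 0 <= a k) -> (forall k, a k <= b k) ->
  (lux_norm M a <= lux_norm M b)%E.
Proof.
move=> a0 ab; apply: ereal_inf_le_tmp => _ [s [s0 Hs] <-]; exists s => //.
split=> //; apply: le_trans Hs; apply: le_esum => k _; rewrite lee_fin.
by apply: orlicz_fun_le; rewrite ?divr_ge0 ?ler_wpM2r ?invr_ge0 ?(ltW s0).
Qed.

Lemma lux_norm0 : (lux_norm M (fun=> 0%R) <= 0)%E.
Proof.
apply/lee_addgt0Pr => e e0; rewrite add0e; apply: ge_ereal_inf.
exists e%:E => //; exists e => //; split => //.
by rewrite esum1 // => k _; rewrite mul0r orlicz_fun0.
Qed.

Lemma lux_normZ_le (c : R) a : 0 < c ->
  (lux_norm M (fun k => (c * a k)%R) <= c%:E * lux_norm M a)%E.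
Proof.
move=> c0; rewrite -lee_pdivrMl//; apply: le_ereal_inf_tmp => _ [s [s0 Hs] <-].
rewrite lee_pdivrMl//; apply: ereal_inf_lbound; exists (c * s); last by rewrite EFinM.
split; first by rewrite mulr_gt0.
rewrite (eq_esum (b := fun k => (M k (a k / s))%:E))// => k _.
by congr (_%:E); congr (M k _); field; rewrite !gt_eqF.
Qed.

Lemma lux_norm_le_add a b s t : (forall k, 0 <= a k) -> (forall k, 0 <= b k) ->
  0 < s -> 0 < t ->
  (\esum_(k in [set: int]) (M k (a k / s))%:E <= 1%:E)%E ->
  (\esum_(k in [set: int]) (M k (b k / t))%:E <= 1%:E)%E ->
  (lux_norm M (fun k => (a k + b k)%R) <= (s + t)%:E)%E.
Proof.
move=> a0 b0 s0 t0 Has Hbt; have st0 : 0 < s + t by rewrite addr_gt0.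
apply: ereal_inf_lbound; exists (s + t) => //; split => //.
have ws : 0 <= s / (s + t) := divr_ge0 (ltW s0) (ltW st0).
have wt : 0 <= t / (s + t) := divr_ge0 (ltW t0) (ltW st0).
have Ma0 k : (0 <= (M k (a k / s))%:E)%E.
  by rewrite lee_fin orlicz_fun_ge0// divr_ge0 ?(ltW s0).
have Mb0 k : (0 <= (M k (b k / t))%:E)%E.
  by rewrite lee_fin orlicz_fun_ge0// divr_ge0 ?(ltW t0).
apply: (@le_trans _ _ (\esum_(k in [set: int])
   ((s / (s + t))%:E * (M k (a k / s))%:E + (t / (s + t))%:E * (M k (b k / t))%:E))%E).
  apply: le_esum => k _; rewrite -!EFinM -EFinD lee_fin.
  exact: orlicz_fun_mediant.
rewrite esumD; last 2 first.
- by move=> k _; apply: mule_ge0 (Ma0 k); rewrite lee_fin.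
- by move=> k _; apply: mule_ge0 (Mb0 k); rewrite lee_fin.
apply: le_trans (leeD (esumZ_le setT ws Ma0) (esumZ_le setT wt Mb0)) _.
apply: le_trans (leeD (lee_wpmul2l _ Has) (lee_wpmul2l _ Hbt)) _; rewrite ?lee_fin//.
by rewrite !mulr1 -mulrDl divff ?gt_eqF.
Qed.

Lemma lux_normD_le a b : (forall k, 0 <= a k) -> (forall k, 0 <= b k) ->
  (lux_norm M (fun k => (a k + b k)%R) <= lux_norm M a + lux_norm M b)%E.
Proof.
move=> a0 b0; have [->|bfin] := eqVneq (lux_norm M b) +oo%E.
  by rewrite addey ?leey// gt_eqF// (lt_le_trans _ (lux_norm_ge0 a))// ltNy0.
have fb : lux_norm M b \is a fin_num by rewrite ge0_fin_numE ?lux_norm_ge0 ?ltey.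
rewrite -leeBlDr//; apply: le_ereal_inf_tmp => _ [s [s0 Hs] <-].
rewrite leeBlDr// addeC -leeBlDr//; apply: le_ereal_inf_tmp => _ [t [t0 Ht] <-].
by rewrite leeBlDr// -EFinD addrC; apply: lux_norm_le_add.
Qed.

End LuxemburgNorm.

Section OrliczNorm.
Variables (R : realType) (M : int -> R -> R).

Lemma le_orl_norm a b : (forall k, 0 <= a k) -> (forall k, a k <= b k) ->
  (orl_norm M a <= orl_norm M b)%E.
Proof.
move=> a0 ab; apply: ge_ereal_sup => _ [lam [lam0 Hlam] <-].
apply: le_ereal_sup_tmp; exists (\esum_(k in [set: int]) (lam k * b k)%:E)%E.
  by exists lam.
by apply: le_esum => k _; rewrite lee_fin ler_wpM2l.
Qed.

Lemma orl_norm0 : (orl_norm M (fun=> 0%R) <= 0)%E.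
Proof. by apply: ge_ereal_sup => _ [lam _ <-]; rewrite esum1 // => k _; rewrite mulr0. Qed.

Lemma orl_normZ_le (c : R) a : 0 <= c -> (forall k, 0 <= a k) ->
  (orl_norm M (fun k => (c * a k)%R) <= c%:E * orl_norm M a)%E.
Proof.
move=> c0 a0; apply: ge_ereal_sup => _ [lam [lam0 Hlam] <-].
rewrite (eq_esum (b := fun k => (c%:E * (lam k * a k)%:E)%E)); last first.
  by move=> k _; rewrite -EFinM mulrCA.
apply: le_trans (esumZ_le setT c0 _) _; first by move=> k; rewrite lee_fin mulr_ge0.
by rewrite lee_wpmul2l ?lee_fin//; apply: ereal_sup_ubound; exists lam.
Qed.

Lemma orl_normD_le a b : (forall k, 0 <= a k) -> (forall k, 0 <= b k) ->
  (orl_norm M (fun k => (a k + b k)%R) <= orl_norm M a + orl_norm M b)%E.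
Proof.
move=> a0 b0; apply: ge_ereal_sup => _ [lam [lam0 Hlam] <-].
rewrite (eq_esum (b := fun k => ((lam k * a k)%:E + (lam k * b k)%:E)%E)); last first.
  by move=> k _; rewrite -EFinD mulrDr.
rewrite esumD; last 2 first.
- by move=> k _; rewrite lee_fin mulr_ge0.
- by move=> k _; rewrite lee_fin mulr_ge0.
by apply: leeD; apply: ereal_sup_ubound; exists lam.
Qed.

End OrliczNorm.

Section SeqNorm.
Variables (R : realType) (M : int -> R -> R) (nk : norm_kind).
Hypothesis HM : forall k, orlicz_fun (M k).
Local Notation N := (seq_norm nk M).

Lemma le_seq_norm a b : (forall k, 0 <= a k) -> (forall k, a k <= b k) -> (N a <= N b)%E.
Proof. by case: nk => /=; [apply: le_lux_norm | apply: le_orl_norm]. Qed.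

Lemma seq_norm0 : (N (fun=> 0%R) <= 0)%E.
Proof. by case: nk => /=; [apply: lux_norm0 | apply: orl_norm0]. Qed.

Lemma seq_normD_le a b : (forall k, 0 <= a k) -> (forall k, 0 <= b k) ->
  (N (fun k => (a k + b k)%R) <= N a + N b)%E.
Proof. by case: nk => /=; [apply: lux_normD_le | apply: orl_normD_le]. Qed.

Lemma seq_normZ_le (c : R) a : 0 <= c -> (forall k, 0 <= a k) ->
  (N (fun k => (c * a k)%R) <= c%:E * N a)%E.
Proof.
move=> c0 a0; have [->|c_neq0] := eqVneq c 0.
  by rewrite mul0e (eq_fun (fun k => mul0r (a k))); apply: seq_norm0.
have c_gt0 : 0 < c by rewrite lt_def c_neq0.
by case: nk => /=; [apply: lux_normZ_le | apply: orl_normZ_le].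
Qed.

Lemma seq_norm_sum_le (I : eqType) (r : seq I) (F : I -> int -> R) :
  (forall i k, i \in r -> 0 <= F i k) ->
  (N (fun k => (\sum_(i <- r) F i k)%R) <= \sum_(i <- r) N (F i))%E.
Proof.
elim: r => [|i r IHr] F0.
  by rewrite big_nil (eq_fun (fun k => big_nil _ _ _ _)); apply: seq_norm0.
have Fr0 j k : j \in r -> 0 <= F j k by move=> jr; rewrite F0 // in_cons jr orbT.
rewrite big_cons (eq_fun (fun k => big_cons _ _ _ _ _ _)).
apply: le_trans (seq_normD_le _ _) _ => [k|k|]; first by rewrite F0 ?mem_head.
  by rewrite big_seq; apply: sumr_ge0 => j /Fr0.
by apply: leeD => //; apply: IHr.
Qed.

End SeqNorm.

Lemma sumr_incr_upto (V : zmodType) (F : nat -> V) (a n : nat) :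
  \sum_(1 <= i < n.+1) (if (i <= a)%N then F i - F i.-1 else 0) = F (minn a n) - F 0.
Proof.
elim: n => [|n IHn]; first by rewrite big_geq // minn0 subrr.
rewrite big_nat_recr //= IHn; case: (leqP n.+1 a) => [na|an].
  by rewrite !(minn_idPr _) ?(ltnW na) // addrC addrA subrK.
by rewrite addr0 !(minn_idPl _) // ltnW.
Qed.

Definition high_part (V : zmodType) (a : int -> V) (nu : nat) (k : int) : V :=
  if (nu <= absz k)%N then a k else 0.

Section Dilation.
Variables (R : realType) (phi : R -> R) (tau : R) (n : nat).

Definition phi_grid (i : nat) : R := phi (tau * i%:R / n%:R).

Hypotheses (tau_gt0 : 0 < tau) (n_gt0 : (0 < n)%N).
Hypotheses (phi_ge0 : forall t, 0 <= phi t) (phiN : forall t, phi (- t) = phi t).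
Hypothesis phi0 : phi 0 = 0.
Hypothesis phi_mono : {in `[0, tau] &, forall x y, x <= y -> phi x <= phi y}.
Hypothesis phi_max : forall t, phi t <= phi tau.

Lemma grid_in_itv i : (i <= n)%N -> tau * i%:R / n%:R \in `[0, tau].
Proof.
move=> i_le_n; rewrite in_itv /= divr_ge0 ?mulr_ge0 ?(ltW tau_gt0) //=.
by rewrite ler_pdivrMr ?ltr0n // ler_wpM2l ?(ltW tau_gt0) ?ler_nat.
Qed.

Lemma phi_grid_incr_ge0 i : (i <= n)%N -> 0 <= phi_grid i - phi_grid i.-1.
Proof.
move=> i_le_n; rewrite subr_ge0; apply: phi_mono.
- exact: grid_in_itv (leq_trans (leq_pred i) i_le_n).
- exact: grid_in_itv.
by rewrite ler_wpM2r ?invr_ge0 // ler_wpM2l ?(ltW tau_gt0) // ler_nat leq_pred.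
Qed.

Lemma phi_dilate_le (k : int) h : `|h| <= tau / n%:R ->
  `|phi (k%:~R * h)| <= phi_grid (minn (absz k) n).
Proof.
move=> h_le; rewrite ger0_norm //.
have -> : phi (k%:~R * h) = phi `|k%:~R * h|.
  by have [kh0|kh0] := leP 0 (k%:~R * h); [rewrite ger0_norm | rewrite ltr0_norm // phiN].
have [k_le_n|n_lt_k] := leqP (absz k) n; last first.
  by rewrite /phi_grid mulfK ?pnatr_eq0 -?lt0n // phi_max.
have kh_le : `|k%:~R * h| <= tau * (absz k)%:R / n%:R.
  rewrite normrM -intr_norm -natr_absz mulrAC mulrC.
  by rewrite ler_wpM2r ?ler0n.
rewrite /phi_grid; apply: phi_mono => //; last exact: grid_in_itv.
rewrite in_itv /= normr_ge0 /=; apply: le_trans kh_le _.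
by have := grid_in_itv k_le_n; rewrite in_itv /= => /andP[].
Qed.

Lemma phi_dilate_mul_le (a : int -> R) (k : int) h : 0 <= a k -> `|h| <= tau / n%:R ->
  `|phi (k%:~R * h)| * a k <=
    \sum_(1 <= nu < n.+1) (phi_grid nu - phi_grid nu.-1) * high_part a nu k.
Proof.
move=> ak0 h_le; rewrite (eq_bigr (fun nu =>
   (if (nu <= absz k)%N then phi_grid nu - phi_grid nu.-1 else 0) * a k)); last first.
  by move=> nu _; rewrite /high_part; case: ifP; rewrite ?mulr0 ?mul0r.
rewrite -mulr_suml sumr_incr_upto /phi_grid mulr0n mulr0 mul0r phi0 subr0.
by rewrite ler_wpM2r // phi_dilate_le.
Qed.

End Dilation.

Lemma seq_norm_high_part_le_best_approx (R : realType) (M : int -> R -> R) nk u v nu :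
  (forall k, orlicz_fun (M k)) ->
  (seq_norm nk M (high_part (fmod u v) nu) <= best_approx nk M u v nu)%E.
Proof.
move=> HM; apply: le_ereal_inf_tmp => _ [cr _ [ci _ <-]].
by apply: le_seq_norm => // k; rewrite /high_part;
  case: (ltnP (absz k) nu) => // _; apply: sqrtr_ge0.
Qed.

Theorem theorem3 (R : realType) (M : int -> R -> R) (nk : norm_kind)
    (u v : R -> R) (phi : R -> R) (tau : R) (n : nat) :
  (forall k, orlicz_fun (M k)) ->
  in_SM M u v ->
  in_Phi phi ->
  0 < tau ->
  {in `[0, tau] &, forall x y, x <= y -> phi x <= phi y} ->
  (forall t, phi t <= phi tau) ->
  (0 < n)%N ->
  (modulus_phi nk M phi u v (tau / n%:R) <=
    \sum_(1 <= nu < n.+1)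
      ((phi (tau * nu%:R / n%:R) - phi (tau * (nu.-1)%:R / n%:R))%:E
        * best_approx nk M u v nu))%E.
Proof.
move=> HM _ [_ [phi_ge0 phiN phi0 _]] tau_gt0 phi_mono phi_max n_gt0.
pose incr nu := phi_grid phi tau n nu - phi_grid phi tau n nu.-1.
have incr_ge0 nu : nu \in index_iota 1 n.+1 -> 0 <= incr nu.
  by rewrite mem_index_iota ltnS => /andP[_]; apply: phi_grid_incr_ge0.
have fmod_ge0 k : 0 <= fmod u v k by apply: sqrtr_ge0.
have high_ge0 nu k : 0 <= high_part (fmod u v) nu k by rewrite /high_part; case: ifP.
apply: (@le_trans _ _ (seq_norm nk M (fun k =>
    (\sum_(1 <= nu < n.+1) incr nu * high_part (fmod u v) nu k)%R))).
  apply: ge_ereal_sup => _ [h h_le <-]; apply: le_seq_norm => // k.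
    by rewrite mulr_ge0.
  exact: phi_dilate_mul_le.
apply: le_trans (seq_norm_sum_le _ _ _) _ => // [nu k nu_range|].
  by rewrite mulr_ge0 ?incr_ge0.
rewrite big_seq [X in (_ <= X)%E]big_seq; apply: lee_sum => nu nu_range.
apply: le_trans (seq_normZ_le _ _ _ _) _ => //; first exact: incr_ge0.
by rewrite lee_wpmul2l ?lee_fin ?incr_ge0 ?seq_norm_high_part_le_best_approx.
Qed.
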